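(* Let $X$ be a metrizable space which is locally compact and $\sigma$-compact, let $G$ be a group and $\varphi\colon G\times X\to X$ an action (continuity is not required). The following are equivalent: (1) $\varphi$ is metric-independent expansive (MIE); (2) $\varphi$ is expansively extendible at a point; (3) $\varphi$ is cocompactly expansive.
   Context: Write $g\cdot x=\varphi(g,x)$. For a metric $d$ on $X$, the action is expansive with respect to $d$ if there is $c>0$ such that for all $x\neq y$ there is $g\in G$ with $d(g\cdot x,g\cdot y)>c$; it is MIE if it is expansive with respect to every metric compatible with the topology. For a family $\mathcal U$ of subsets and a set $A$, $A\prec\mathcal U$ means $A\subseteq U$ for some $U\in\mathcal U$. An action of $G$ on a space $Z$ is expansive by coverings if there is a finite open cover $\mathcal U$ of $Z$ such that $\{g\cdot x,g\cdot y\}\prec\mathcal U$ for all $g\in G$ implies $x=y$. The action $\varphi$ is expansively extendible at a point if, with $X'=X\cup\{p\}$ the one-point (Alexandroff) compactification of $X$, the action $\varphi'$ of $G$ on $X'$ defined by $\varphi'|_{G\times X}=\varphi$ and $g\cdot p=p$ for all $g\in G$ is expansive by coverings. The action is cocompactly expansive if there exist a finite open cover $\mathcal U$ of $X$ and a compact $K\subseteq X$ such that (i) $G\cdot K=X$ and (ii) whenever $\{g\cdot x,g\cdot y\}\prec\mathcal U\cup\{X\setminus K\}$ for every $g\in G$, then $x=y$. *)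

From HB Require Import structures.
From mathcomp Require Import all_boot all_order all_algebra.
From mathcomp Require Import monoid.
From mathcomp Require Import all_classical all_reals all_analysis.
Set Implicit Arguments. Unset Strict Implicit. Unset Printing Implicit Defensive.
Import Order.TTheory GRing.Theory Num.Theory.
Local Open Scope classical_set_scope.
Local Open Scope ring_scope.

Definition is_action (G : groupType) (X : Type) (phi : G -> X -> X) :=
  (forall x, phi 1%g x = x) /\ (forall g h x, phi (g * h)%g x = phi g (phi h x)).

Definition is_metric (R : realType) (X : Type) (d : X -> X -> R) :=
  [/\ forall x y, 0 <= d x y,
      forall x y, d x y = 0 <-> x = y,
      forall x y, d x y = d y x &
      forall x y z, d x z <= d x y + d y z].

Definition dball (R : realType) (X : Type) (d : X -> X -> R) (x : X) (e : R) :=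
  [set y | d x y < e].

Definition compatible_metric (R : realType) (X : topologicalType)
    (d : X -> X -> R) :=
  is_metric d /\
  forall A : set X, open A <->
    (forall x, A x -> exists2 e : R, 0 < e & dball d x e `<=` A).

Definition metrizable (R : realType) (X : topologicalType) :=
  exists d : X -> X -> R, compatible_metric d.

Definition sigma_compact (X : topologicalType) :=
  exists K : nat -> set X, (forall n, compact (K n)) /\ \bigcup_n K n = setT.

Definition expansive_wrt (R : realType) (G X : Type) (phi : G -> X -> X)
    (d : X -> X -> R) :=
  exists2 c : R, 0 < c &
    forall x y, x <> y -> exists g, c < d (phi g x) (phi g y).

Definition MIE (R : realType) (G : Type) (X : topologicalType)
    (phi : G -> X -> X) :=
  forall d : X -> X -> R, compatible_metric d -> expansive_wrt phi d.

Definition finite_open_cover (Z : topologicalType) (n : nat)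
    (U : 'I_n -> set Z) :=
  (forall i, open (U i)) /\ (forall z, exists i, U i z).

Definition prec2 (Z : Type) (n : nat) (U : 'I_n -> set Z) (a b : Z) :=
  exists i, [set a; b] `<=` U i.

Definition expansive_by_coverings (G : Type) (Z : topologicalType)
    (psi : G -> Z -> Z) :=
  exists n (U : 'I_n -> set Z), finite_open_cover U /\
    forall x y, (forall g, prec2 U (psi g x) (psi g y)) -> x = y.

Definition opc_action (G : Type) (X : topologicalType) (phi : G -> X -> X)
    (g : G) (x : one_point_compactification X) : one_point_compactification X :=
  match x with Some x' => Some (phi g x') | None => None end.

Definition expansively_extendible (G : Type) (X : topologicalType)
    (phi : G -> X -> X) :=
  expansive_by_coverings (opc_action phi).

Definition cocompactly_expansive (G : Type) (X : topologicalType)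
    (phi : G -> X -> X) :=
  exists n (U : 'I_n -> set X) (K : set X),
    [/\ finite_open_cover U, compact K,
        (forall x, exists g k, K k /\ phi g k = x) &
        forall x y,
          (forall g, prec2 U (phi g x) (phi g y) \/
                     [set phi g x; phi g y] `<=` ~` K) -> x = y].

(* (2) <-> (3): a finite open cover of the one-point compactification is a
   finite open cover of X together with a neighbourhood of the point at
   infinity, i.e. the complement of a compact set K; expansivity of the
   extension forces every orbit to meet K, and conversely.
   (3) -> (1): for any compatible metric, a Lebesgue number of the cover on the
   compact set K is an expansivity constant.
   (1) -> (3): local compactness and sigma-compactness give a continuous
   f > 0 with compact superlevel sets [f >= e]. The compatible metric
   min (d x y + |f x - f y|, f x + f y) makes the region [f < r / 2] have
   diameter < r. Choosing r at most the expansivity constant and below the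
   (at most one) fixed point with small f, every orbit meets the compact set
   [f >= r / 2], and finitely many balls of radius r / 2 covering it, together
   with [f < r / 2], witness cocompact expansivity. *)

From HB Require Import structures.
From mathcomp Require Import all_boot all_order all_algebra.
From mathcomp Require Import monoid finmap.
From mathcomp Require Import all_classical all_reals all_analysis.
From mathcomp Require Import lra.
Import Order.TTheory GRing.Theory Num.Theory.
Import numFieldNormedType.Exports.
Set Implicit Arguments. Unset Strict Implicit. Unset Printing Implicit Defensive.
Local Open Scope classical_set_scope.
Local Open Scope ring_scope.

Section compatible_metric.
Context {R : realType} {X : topologicalType} (d : X -> X -> R).
Hypothesis d_compat : compatible_metric d.

Lemma metric_ge0 x y : 0 <= d x y.
Proof. by case: d_compat => -[]. Qed.

Lemma metric_eq0 x y : d x y = 0 <-> x = y.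
Proof. by case: d_compat => -[]. Qed.

Lemma metric_sym x y : d x y = d y x.
Proof. by case: d_compat => -[]. Qed.

Lemma metric_triangle x y z : d x z <= d x y + d y z.
Proof. by case: d_compat => -[]. Qed.

Lemma metric_xx x : d x x = 0.
Proof. exact/metric_eq0. Qed.

Lemma open_dball x e : open (dball d x e).
Proof.
case: d_compat => _ /(_ (dball d x e)) [_]; apply => y dxy.
exists (e - d x y); first by rewrite subr_gt0.
move=> z dyz; apply: le_lt_trans (metric_triangle x y z) _.
by rewrite -ltrBrDl.
Qed.

Lemma nbhs_dball x e : 0 < e -> nbhs x (dball d x e).
Proof.
move=> e0; apply: open_nbhs_nbhs; split; first exact: open_dball.
by rewrite /dball /= metric_xx.
Qed.

Lemma nbhs_dball_sub x A : nbhs x A -> exists2 e, 0 < e & dball d x e `<=` A.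
Proof.
rewrite nbhsE => -[B [oB Bx] BA].
case: d_compat => _ /(_ B) [/(_ oB) /(_ x Bx) [e e0 eB] _].
by exists e => // z /eB /BA.
Qed.

Lemma dball_dist_lt q e a b : dball d q e a -> dball d q e b -> d a b < e + e.
Proof.
rewrite /dball /= => qa qb; have := metric_triangle a q b.
by rewrite (metric_sym a q); lra.
Qed.

Lemma compatible_metric_hausdorff : hausdorff_space X.
Proof.
move=> p q clpq; apply: contrapT => npq.
have e2 : 0 < d p q / 2.
  rewrite divr_gt0 // lt_neqAle metric_ge0 andbT.
  by apply/eqP => /esym /metric_eq0.
have [z [pz qz]] := clpq _ _ (nbhs_dball p e2) (nbhs_dball q e2).
move: pz qz; rewrite /dball /= (metric_sym q z) => pz zq.
by have := metric_triangle p z q; lra.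
Qed.

Lemma compact_lebesgue_number (I : Type) (K : set X) (U : I -> set X) :
  compact K -> (forall i, open (U i)) -> K `<=` \bigcup_i U i ->
  exists2 e, 0 < e & forall a b, K a -> d a b < e -> exists i, U i a /\ U i b.
Proof.
move=> cK oU KU.
have : \forall e \near (0 : R)^'+, K `<=`
    [set a | forall b, d a b < e -> exists i, U i a /\ U i b].
  apply: (proj1 (compact_near_coveringP K) cK) => x /KU [i _ Uix].
  have [e e0 eU] := nbhs_dball_sub (open_nbhs_nbhs (conj (oU i) Uix)).
  have e20 : 0 < e / 2 by rewrite divr_gt0.
  exists (dball d x (e / 2), [set r : R | r < e / 2]).
    by split; [exact: nbhs_dball | exact: nbhs_right_lt].
  move=> [a r] [xa /= re] b ab; rewrite /dball /= in xa.
  exists i; split; apply: eU; rewrite /dball /=; first by lra.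
  by have := metric_triangle x a b; lra.
move=> /(filterI (nbhs_right_gt 0)) /filter_ex [e [e0 He]].
by exists e => // a b /He; apply.
Qed.

End compatible_metric.

Section one_point_compactification.
Context {X : topologicalType}.
Local Notation opc := (one_point_compactification X).

Lemma open_Some_preimage (V : set opc) : open V -> open (Some @^-1` V).
Proof.
by have /continuousP := @one_point_compactification_some_continuous X; apply.
Qed.

Lemma compact_Some_image (K : set X) : compact K -> compact (Some @` K : set opc).
Proof.
move=> cK; apply: continuous_compact => //; apply: continuous_subspaceT => x.
exact: one_point_compactification_some_continuous.
Qed.

Lemma compact_Some_preimage (B : set opc) :
  compact B -> ~ B None -> compact (Some @^-1` B).
Proof.
move=> cB nBN F PF FB.
have [[z|] [Bz clz]] := cB _ (fmap_proper_filter Some PF) FB; last by [].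
exists z; split => // A W FA Wz.
have [w [[a Aa aw] [b Wb bw]]] := clz (Some @` A) (Some @` W)
  (filterS (fun y Ay => ex_intro2 _ _ y Ay erefl) FA)
  (@one_point_compactification_some_nbhs X _ _ Wz).
by exists a; split => //; move: bw; rewrite -aw => -[<-].
Qed.

Lemma compact_closed_opc (B : set opc) : closed B -> compact B.
Proof.
by move=> cB; exact: subclosed_compact cB one_point_compactification_compact _.
Qed.

End one_point_compactification.

(* [compact_cover] is only available on pointed spaces, hence the detour
   through the one-point compactification. *)
Lemma compact_finite_cover (T : topologicalType) (I : choiceType)
    (A : set T) (F : I -> set T) :
  compact A -> (forall i, open (F i)) -> A `<=` \bigcup_i F i ->
  exists n (s : 'I_n -> I), A `<=` \bigcup_j F (s j).
Proof.
move=> cA oF AF.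
have := compact_Some_image cA; rewrite compact_cover.
move=> /(_ I setT (fun i => Some @` F i)) [i _|_ [x /AF [i _ Fix] <-]|D _ AD].
- exact/one_point_compactification_open_some.
- by exists i => //; exists x.
exists (size (enum_fset D)), (tnth (in_tuple (enum_fset D))) => x Ax.
have [q Dq [y Fqy [yx]]] := AD (Some x) (ex_intro2 _ _ x Ax erefl).
have qD : (index q (enum_fset D) < size (enum_fset D))%N by rewrite index_mem.
by exists (Ordinal qD) => //; rewrite (tnth_nth q) /= nth_index // -yx.
Qed.

Definition extend_cover (T : Type) (n : nat) (U : 'I_n -> set T) (V : set T)
    (i : 'I_n.+1) : set T :=
  if unlift ord_max i is Some j then U j else V.

Lemma finite_open_cover_extend (Z : topologicalType) n (U : 'I_n -> set Z)
    (V : set Z) :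
  (forall i, open (U i)) -> open V -> (forall z, (exists i, U i z) \/ V z) ->
  finite_open_cover (extend_cover U V).
Proof.
move=> oU oV cov; split => [i|z]; first by rewrite /extend_cover; case: unliftP.
case: (cov z) => [[i Uiz]|Vz].
  by exists (lift ord_max i); rewrite /extend_cover liftK.
by exists ord_max; rewrite /extend_cover unlift_none.
Qed.

Lemma prec2_extend_cover (T : Type) n (U : 'I_n -> set T) (V : set T) a b :
  prec2 (extend_cover U V) a b <-> prec2 U a b \/ [set a; b] `<=` V.
Proof.
split => [[i]|[[i Uab]|Vab]].
- by rewrite /extend_cover; case: unliftP => [j _ Uab|_ Vab]; [left; exists j|right].
- by exists (lift ord_max i); rewrite /extend_cover liftK.
- by exists ord_max; rewrite /extend_cover unlift_none.
Qed.

Lemma inv_succ_lt_half (F : realFieldType) (e : F) (N n : nat) :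
  0 < e -> 2 / e < N%:R -> (N <= n)%N -> (n.+1)%:R^-1 < e / 2.
Proof.
move=> e0 HN Nn; have : 2 / e < (n.+1)%:R.
  by apply: lt_le_trans HN _; rewrite ler_nat ltnW.
rewrite ltr_pdivrMr // => HnN; have n0 : (0 : F) < (n.+1)%:R by rewrite ltr0Sn.
by rewrite -[_^-1]mul1r ltr_pdivrMr //; nra.
Qed.

Section positive_proper_function.
Context {R : realType} {X : topologicalType}.
Hypothesis hausdorffX : hausdorff_space X.
Hypothesis lcX : locally_compact [set: X].
Variable K : nat -> set X.
Hypothesis cK : forall n, compact (K n).
Hypothesis covK : forall x, exists n, K n x.
Local Notation opc := (one_point_compactification X).

Let opc_hausdorff : hausdorff_space opc.
Proof. exact: one_point_compactification_hausdorff. Qed.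

Let separator n : uniform_separator [set (None : opc)] (Some @` K n).
Proof.
apply: normal_uniform_separator.
- exact: compact_normal (one_point_compactification_compact (X:=X)).
- exact/accessible_closed_set1/hausdorff_accessible.
- by apply: compact_closed opc_hausdorff _; exact: compact_Some_image.
- by apply/seteqP; split => // z [-> [y _]].
Qed.

Let bump n : opc -> R := Urysohn [set None : opc] (Some @` K n).

Let bump_continuous n : continuous (bump n).
Proof. exact: Urysohn_continuous. Qed.

Let bump_range n z : 0 <= bump n z <= 1.
Proof.
have /(_ (bump n z)) := @Urysohn_range opc R [set None] (Some @` K n).
by move=> /(_ (ex_intro2 _ _ z I erefl)); rewrite /= in_itv.
Qed.

Let bump_None n : bump n None = 0.
Proof. by apply: (Urysohn_sub0 (separator n)); exists None. Qed.

Let bump_K n x : K n x -> bump n (Some x) = 1.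
Proof.
by move=> Kx; apply: (Urysohn_sub1 (separator n)); exists (Some x) => //; exists x.
Qed.

(* The [n]-th bump is damped by [1 / (n + 1)] so that their supremum is
   continuous although infinitely many of them may be involved. *)
Let wbump n x : R := bump n (Some x) / (n.+1)%:R.

Let wbump_ge0 n x : 0 <= wbump n x.
Proof. by rewrite divr_ge0 //; case/andP: (bump_range n (Some x)). Qed.

Let wbump_le_inv n x : wbump n x <= (n.+1)%:R^-1.
Proof.
by rewrite -[leRHS]mul1r ler_pM2r ?invr_gt0 ?ltr0Sn //; case/andP: (bump_range n (Some x)).
Qed.

Let inv_succ_le1 n : (n.+1)%:R^-1 <= 1 :> R.
Proof. by rewrite invf_le1 ?ltr0Sn // ler1n. Qed.

Let wbump_le_bump n x : wbump n x <= bump n (Some x).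
Proof. by apply: ler_piMr (inv_succ_le1 n); case/andP: (bump_range n (Some x)). Qed.

Let wbump_near N x e : 0 < e ->
  \forall t \near x, forall n, (n < N)%N -> `|wbump n x - wbump n t| < e.
Proof.
move=> e0; suff : \forall t \near x, forall n : 'I_N, `|wbump n x - wbump n t| < e.
  by apply: filterS => t H n nN; exact: (H (Ordinal nN)).
apply: filter_forall => n.
have : {for x, continuous (bump n \o Some)}.
  exact/continuous_comp/bump_continuous/one_point_compactification_some_continuous.
move/cvgrPdist_lt => /(_ e e0); apply: filterS => t /= dt; apply: le_lt_trans dt.
rewrite /wbump -mulrBl normrM normfV normr_nat.
exact: ler_piMr (normr_ge0 _) (inv_succ_le1 n).
Qed.

Let weight x := sup (range (wbump ^~ x)).

Let weight_has_sup x : has_sup (range (wbump ^~ x)).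
Proof.
split; first by exists (wbump 0 x), 0%N.
by exists 1 => _ [n _ <-]; exact: le_trans (wbump_le_inv n x) (inv_succ_le1 n).
Qed.

Let wbump_le_weight n x : wbump n x <= weight x.
Proof. by apply: sup_upper_bound; [exact: weight_has_sup | exists n]. Qed.

Let weight_le x b : (forall n, wbump n x <= b) -> weight x <= b.
Proof.
by move=> H; apply: ge_sup; [exists (wbump 0 x), 0%N | move=> _ [n _ <-]].
Qed.

Let weight_gt0 x : 0 < weight x.
Proof.
have [n Kx] := covK x; apply: lt_le_trans (wbump_le_weight n x).
by rewrite /wbump bump_K // mul1r invr_gt0 ltr0Sn.
Qed.

Let weight_le_near e N x t : 0 < e -> 2 / e < N%:R ->
    (forall n, (n < N)%N -> `|wbump n x - wbump n t| < e / 2) ->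
  weight t <= weight x + e / 2.
Proof.
move=> e0 HN H; apply: weight_le => n; case: (ltnP n N) => [nN|Nn].
  move: (H n nN); rewrite ltr_norml => /andP [H1 _].
  by have := wbump_le_weight n x; lra.
apply: le_trans (wbump_le_inv n t) (ltW (lt_le_trans (inv_succ_lt_half e0 HN Nn) _)).
by rewrite lerDr ltW.
Qed.

Let weight_continuous : continuous weight.
Proof.
move=> x; apply/cvgrPdist_lt => e e0.
have e20 : 0 < e / 2 by rewrite divr_gt0.
have HN := archi_boundP (ltW (divr_gt0 (ltr0Sn R 1) e0)).
apply: filterS (wbump_near (Num.Def.archi_bound (2 / e)) x e20) => t H.
have Hxt := weight_le_near e0 HN H.
have Htx : weight x <= weight t + e / 2.
  by apply: weight_le_near e0 HN _ => n nN; rewrite distrC; exact: H.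
by rewrite ltr_norml; apply/andP; split; lra.
Qed.

Let weight_superlevel_compact e : 0 < e -> compact [set x | e <= weight x].
Proof.
move=> e0; have HN := archi_boundP (ltW (divr_gt0 (ltr0Sn R 1) e0)).
set N := Num.Def.archi_bound (2 / e) in HN.
pose W n := Some @^-1` [set z : opc | e / 2 <= bump n z].
apply: (@subclosed_compact _ _ (\bigcup_(n < N) W n)).
- exact: (proj1 (continuous_closedP _) weight_continuous _ (@closed_ge R e)).
- rewrite bigcup_mkord; apply: bigsetU_compact => n _.
  apply: compact_Some_preimage; last by rewrite /= bump_None; lra.
  apply: compact_closed_opc.
  exact: (proj1 (continuous_closedP (bump n)) (@bump_continuous n) _ (@closed_ge R (e / 2))).
move=> x /= ex; have e20 : 0 < e / 2 by rewrite divr_gt0.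
have [_ [n _ <-] lt] : exists2 y, range (wbump ^~ x) y & e / 2 < y.
  by apply: sup_gt; [exists (wbump 0 x), 0%N | rewrite -/(weight x); lra].
exists n; last by have := wbump_le_bump n x; rewrite /W /=; lra.
rewrite /= ltnNge; apply/negP => Nn.
have := lt_trans lt (le_lt_trans (wbump_le_inv n x) (inv_succ_lt_half e0 HN Nn)).
by rewrite ltxx.
Qed.

Lemma exists_positive_proper_function : exists f : X -> R,
  [/\ continuous f, forall x, 0 < f x &
      forall e, 0 < e -> compact [set x | e <= f x]].
Proof. by exists weight; split. Qed.

End positive_proper_function.

Section truncated_metric.
Context {R : realType} {X : topologicalType} (d : X -> X -> R) (f : X -> R).
Hypothesis d_compat : compatible_metric d.
Hypothesis f_continuous : continuous f.
Hypothesis f_gt0 : forall x, 0 < f x.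

Let lifted_metric x y := d x y + `|f x - f y|.

(* Points with small [f] are all close to each other: [f] plays the role of a
   distance to the point at infinity. *)
Definition truncated_metric x y := Num.min (lifted_metric x y) (f x + f y).

Local Notation rho := truncated_metric.

Lemma truncated_metric_le_add x y : rho x y <= f x + f y.
Proof. by rewrite /rho ge_min lexx orbT. Qed.

Let truncated_metric_le_lifted x y : rho x y <= lifted_metric x y.
Proof. by rewrite /rho ge_min lexx. Qed.

Let truncated_metricE x y : rho x y = lifted_metric x y \/ rho x y = f x + f y.
Proof. by rewrite /rho; case: (leP (lifted_metric x y)); [left|right]. Qed.

Let dist_f_le_truncated_metric x y : `|f x - f y| <= rho x y.
Proof.
rewrite /rho le_min /lifted_metric lerDr (metric_ge0 d_compat) /=.
have := f_gt0 x; have := f_gt0 y => hy hx.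
by rewrite ler_norml; apply/andP; split; lra.
Qed.

Let truncated_metric_lifted x y : rho x y < f x -> rho x y = lifted_metric x y.
Proof. by case: (truncated_metricE x y) => -> //; have := f_gt0 y; lra. Qed.

Lemma truncated_metric_is_metric : is_metric rho.
Proof.
have d0 := metric_ge0 d_compat; split.
- move=> x y; rewrite le_min addr_ge0 ?d0 //=.
  by rewrite addr_ge0 // ltW.
- move=> x y; split => [|<-]; last first.
    rewrite /rho; have -> : lifted_metric x x = 0.
      by rewrite /lifted_metric (metric_xx d_compat) subrr normr0 addr0.
    by apply: min_l; rewrite addr_ge0 ?ltW.
  case: (truncated_metricE x y) => -> /eqP; last first.
    by rewrite paddr_eq0 ?ltW // => /andP [/eqP fx0]; have := f_gt0 x; rewrite fx0 ltxx.
  by rewrite paddr_eq0 ?d0 // => /andP [/eqP /(metric_eq0 d_compat)].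
- by move=> x y; rewrite /rho /lifted_metric (metric_sym d_compat) distrC [f x + _]addrC.
- move=> x y z.
  have := dist_f_le_truncated_metric x y; have := dist_f_le_truncated_metric y z.
  rewrite !ler_norml => /andP [yz1 yz2] /andP [xy1 xy2].
  have := truncated_metric_le_add x z; have := truncated_metric_le_lifted x z.
  have := metric_triangle d_compat x y z; have := ler_distD (f y) (f x) (f z).
  rewrite /lifted_metric.
  case: (truncated_metricE x y) => exy; case: (truncated_metricE y z) => eyz;
    by rewrite /lifted_metric in exy eyz; lra.
Qed.

Lemma compatible_truncated_metric : compatible_metric rho.
Proof.
split; first exact: truncated_metric_is_metric.
move=> A; case: d_compat => _ /(_ A) ->; split => H x /H [e e0 eA].
- exists (Num.min e (f x)); first by rewrite lt_min e0 f_gt0.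
  move=> y; rewrite /dball /= lt_min => /andP [ye yf]; apply: eA.
  rewrite /dball /= (le_lt_trans _ ye) // (truncated_metric_lifted yf).
  by rewrite /lifted_metric lerDl.
- have e20 : 0 < e / 2 by rewrite divr_gt0.
  have /cvgrPdist_lt /(_ _ e20) /(nbhs_dball_sub d_compat) [del del0 delH] :=
    @f_continuous x.
  exists (Num.min del (e / 2)); first by rewrite lt_min del0 e20.
  move=> y; rewrite /dball /= lt_min => /andP [yd ye]; apply: eA.
  have := delH y yd; have := truncated_metric_le_lifted x y.
  by rewrite /dball /lifted_metric /=; lra.
Qed.

End truncated_metric.

Lemma prec2C (T : Type) n (U : 'I_n -> set T) a b : prec2 U a b -> prec2 U b a.
Proof. by case=> i Uab; exists i => z [->|->]; apply: Uab; [right|left]. Qed.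

Section extend_cover_Some.
Context {X : topologicalType} (n : nat) (U : 'I_n -> set X) (K : set X).
Local Notation V := (extend_cover (fun i => Some @` U i) (~` (Some @` K))).

Lemma prec2_extend_cover_Some a b :
  prec2 V (Some a) (Some b) -> prec2 U a b \/ [set a; b] `<=` ~` K.
Proof.
move=> /prec2_extend_cover [[i Uab]|Kab]; [left; exists i|right] => z [->|->].
- by have [w Uw [<-]] := Uab _ (or_introl erefl).
- by have [w Uw [<-]] := Uab _ (or_intror erefl).
- by move=> Kz; apply: (Kab (Some a)); [left|exists a].
- by move=> Kz; apply: (Kab (Some b)); [right|exists b].
Qed.

Lemma prec2_extend_cover_None a : prec2 V (Some a) None -> ~ K a.
Proof.
move=> /prec2_extend_cover [[i Ua]|Ka]; first by have [] := Ua None (or_intror erefl).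
by move=> Kz; apply: (Ka (Some a)); [left|exists a].
Qed.

End extend_cover_Some.

Section actions.
Context {G : groupType} {X : topologicalType} (phi : G -> X -> X).
Hypothesis phi_action : is_action phi.
Local Notation opc := (one_point_compactification X).

Lemma action_invK g x : phi g^-1 (phi g x) = x.
Proof. by case: phi_action => act1 actM; rewrite -actM mulVg act1. Qed.

Lemma extendible_cocompactly_expansive :
  expansively_extendible phi -> cocompactly_expansive phi.
Proof.
case=> n [V [[oV covV] expV]]; have [i0 Vi0] := covV None.
exists n, (fun i => Some @^-1` V i), (Some @^-1` (~` V i0)); split.
- split => [i|x]; first exact: open_Some_preimage.
  by have [i Vi] := covV (Some x); exists i.
- by apply: compact_Some_preimage => //; exact/compact_closed_opc/open_closedC.
- move=> x; apply: contrapT => Gx.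
  suff : Some x = None by [].
  apply: expV => g; exists i0 => z /= [->|->] //=.
  apply: contrapT => ngx; apply: Gx; exists g^-1%g, (phi g x).
  by split => //; exact: action_invK.
- move=> x y H; suff : Some x = Some y by case.
  apply: expV => g; case: (H g) => [[i Hi]|Hc].
    by exists i => z /= [->|->]; apply: Hi; [left|right].
  exists i0 => z /= [->|->]; apply: contrapT => nV.
    by apply: (Hc (phi g x)); [left|].
  by apply: (Hc (phi g y)); [right|].
Qed.

Lemma cocompactly_expansive_extendible :
  hausdorff_space X -> locally_compact [set: X] ->
  cocompactly_expansive phi -> expansively_extendible phi.
Proof.
move=> hX lcX [n [U [K [[oU covU] cK GK expU]]]].
have cSK : closed (Some @` K : set opc).
  apply: compact_closed (one_point_compactification_hausdorff lcX hX) _.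
  exact: compact_Some_image.
exists n.+1, (extend_cover (fun i => Some @` U i) (~` (Some @` K))); split.
  apply: finite_open_cover_extend => [i||[x|]].
  - exact/one_point_compactification_open_some.
  - exact: closed_openC.
  - by have [i Uix] := covU x; left; exists i, x.
  - by right => -[].
have orbit_not_None a : ~ (forall g, prec2
    (extend_cover (fun i => Some @` U i) (~` (Some @` K))) (Some (phi g a)) None).
  have [g [k [Kk <-]]] := GK a => H.
  by have /prec2_extend_cover_None := H g^-1%g; rewrite action_invK.
case=> [a|] [b|] H //.
- by congr Some; apply: expU => g; exact: prec2_extend_cover_Some (H g).
- by case: (orbit_not_None a) => g; exact: H g.
- by case: (orbit_not_None b) => g; exact/prec2C/(H g).
Qed.

Lemma cocompactly_expansive_MIE (R : realType) :
  cocompactly_expansive phi -> MIE R phi.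
Proof.
move=> [n [U [K [[oU covU] cK GK expU]]]] d d_compat.
have KU : K `<=` \bigcup_i U i by move=> x _; have [i] := covU x; exists i.
have [e e0 Leb] := compact_lebesgue_number d_compat cK oU KU.
exists (e / 2) => [|x y nxy]; first by rewrite divr_gt0.
apply: contrapT => nexp; apply: nxy; apply: expU => g.
have dxy : d (phi g x) (phi g y) < e.
  have : ~ e / 2 < d (phi g x) (phi g y) by move=> h; apply: nexp; exists g.
  by move/negP; rewrite -leNgt; lra.
have [Kx|nKx] := pselect (K (phi g x)).
  by have [i [Ux Uy]] := Leb _ _ Kx dxy; left; exists i => z [->|->].
have [Ky|nKy] := pselect (K (phi g y)).
  rewrite metric_sym // in dxy.
  by have [i [Uy Ux]] := Leb _ _ Ky dxy; left; exists i => z [->|->].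
by right => z [->|->].
Qed.

End actions.

Section expansive_level.
Context {R : realType} {G : groupType} {X : Type} (phi : G -> X -> X).
Hypothesis phi_action : is_action phi.
Variables (f : X -> R) (rho : X -> X -> R) (c : R).
Hypothesis f_gt0 : forall x, 0 < f x.
Hypothesis rho_le_add : forall x y, rho x y <= f x + f y.
Hypothesis c_gt0 : 0 < c.
Hypothesis rho_expansive :
  forall x y, x <> y -> exists g, c < rho (phi g x) (phi g y).

(* Two distinct fixed points are at [rho]-distance more than [c], so at most
   one of them lies in the region [f < c / 4]. *)
Lemma exists_level_below_fixed_points : exists2 r, 0 < r <= c &
  forall y, (forall g, phi g y = y) -> r / 2 <= f y.
Proof.
have [[y0 [fix0 low0]]|] :=
  pselect (exists y0, (forall g, phi g y0 = y0) /\ f y0 < c / 4).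
  pose m := Num.min (c / 2) (f y0).
  have m1 : m <= c / 2 by rewrite /m ge_min lexx.
  have m2 : m <= f y0 by rewrite /m ge_min lexx orbT.
  have m_gt0 : 0 < m by rewrite /m lt_min f_gt0 divr_gt0.
  exists m; first by rewrite m_gt0 /= (le_trans m1) // ler_pdivrMr // ler_pMr // ler1n.
  move=> y fixy; rewrite leNgt; apply/negP => low.
  have yy0 : y = y0.
    apply: contrapT => /rho_expansive [g]; rewrite fixy fix0.
    by have := rho_le_add y y0; lra.
  by move: low; rewrite yy0; lra.
move=> nolow; exists (c / 2).
  by rewrite divr_gt0 //= ler_pdivrMr // ler_pMr // ler1n.
move=> y fixy; rewrite leNgt; apply/negP => low.
by apply: nolow; exists y; split => //; lra.
Qed.

(* An orbit staying in [f < r / 2] consists of points at [rho]-distance less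
   than [r <= c] from each other, so it is a fixed point. *)
Lemma orbit_meets_level r : r <= c ->
    (forall y, (forall g, phi g y = y) -> r / 2 <= f y) ->
  forall x, exists g, r / 2 <= f (phi g x).
Proof.
case: phi_action => act1 actM rc rfix x; apply: contrapT => low.
have {}low g : f (phi g x) < r / 2.
  by rewrite ltNge; apply/negP => Hg; apply: low; exists g.
suff fixx : forall a, phi a x = x by have := rfix x fixx; have := low 1%g; rewrite act1; lra.
move=> a; apply: contrapT => /rho_expansive [g]; rewrite -actM.
by have := rho_le_add (phi (g * a)%g x) (phi g x); have := low (g * a)%g; have := low g; lra.
Qed.

End expansive_level.

Lemma MIE_cocompactly_expansive (R : realType) (G : groupType)
    (X : topologicalType) (phi : G -> X -> X) :
  is_action phi -> metrizable R X -> locally_compact [set: X] ->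
  sigma_compact X -> MIE R phi -> cocompactly_expansive phi.
Proof.
move=> phi_action [d d_compat] lcX [K [cK covK]] mie.
have covK' x : exists n, K n x.
  have [n _ Kx] : (\bigcup_n K n) x by rewrite covK.
  by exists n.
have [f [f_cont f_gt0 f_proper]] := @exists_positive_proper_function R X
  (compatible_metric_hausdorff d_compat) lcX K cK covK'.
have rho_compat := compatible_truncated_metric d_compat f_cont f_gt0.
have rho_le_add := truncated_metric_le_add d f.
set rho := truncated_metric d f in rho_compat rho_le_add.
have [c c_gt0 rho_exp] := mie rho rho_compat.
have [r /andP [r_gt0 rc] rfix] :=
  exists_level_below_fixed_points f_gt0 rho_le_add c_gt0 rho_exp.
have r2_gt0 : 0 < r / 2 by rewrite divr_gt0.
have rho_low a b : f a < r / 2 -> f b < r / 2 -> rho a b < r.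
  by have := rho_le_add a b; lra.
have C_balls : [set x | r / 2 <= f x] `<=` \bigcup_q dball rho q (r / 2).
  by move=> x _; exists x => //; rewrite /dball /= (metric_xx rho_compat).
have [n [s Cs]] := compact_finite_cover (f_proper _ r2_gt0)
  (fun q => open_dball rho_compat q (r / 2)) C_balls.
exists n.+1, (extend_cover (fun j => dball rho (s j) (r / 2)) [set x | f x < r / 2]).
exists [set x | r / 2 <= f x]; split.
- apply: finite_open_cover_extend => [j||x]; first exact: open_dball.
    exact: (proj1 (continuousP _) f_cont _ (@open_lt R (r / 2))).
  have [Cx|] := leP (r / 2) (f x); last by right.
  by have [j _ Ux] := Cs x Cx; left; exists j.
- exact: f_proper.
- move=> x; have [g hg] := orbit_meets_level phi_action rho_le_add rho_exp rc rfix x.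
  by exists g^-1%g, (phi g x); split => //; exact: action_invK.
- move=> x y H; apply: contrapT => /rho_exp [g]; apply/negP; rewrite -leNgt.
  apply/ltW/(lt_le_trans _ rc).
  case: (H g) => [/prec2_extend_cover [[j Hj]|Hlow]|Hhigh].
  + have := dball_dist_lt rho_compat (Hj _ (or_introl erefl)) (Hj _ (or_intror erefl)).
    by lra.
  + by apply: rho_low; [apply: Hlow; left | apply: Hlow; right].
  + by apply: rho_low; rewrite ltNge; apply/negP; [apply: Hhigh; left | apply: Hhigh; right].
Qed.

Theorem mainTheorem5 (R : realType) (G : groupType) (X : topologicalType)
  (phi : G -> X -> X) :
  metrizable R X -> locally_compact [set: X] -> sigma_compact X ->
  is_action phi ->
  (MIE R phi <-> expansively_extendible phi) /\
  (expansively_extendible phi <-> cocompactly_expansive phi).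
Proof.
move=> metrX lcX scX phi_action.
have hX : hausdorff_space X by case: metrX => d /compatible_metric_hausdorff.
have ce_ee := cocompactly_expansive_extendible phi_action hX lcX.
have ee_ce := extendible_cocompactly_expansive phi_action.
split; split => H.
- exact: ce_ee (MIE_cocompactly_expansive phi_action metrX lcX scX H).
- exact: cocompactly_expansive_MIE R (ee_ce H).
- exact: ee_ce H.
- exact: ce_ee H.
Qed.
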